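(* Let $G$ be a graph, let $k\ge1$ be an integer and let $d:=\Delta(G^{\lfloor k/2\rfloor})$. Then $G^k$ is a $\lfloor k/2\rfloor$-shallow minor of $G\circ\overline{K_{d+1}}$.
   Context: Graphs are finite, simple, undirected. For an integer $m\ge0$, $G^m$ has vertex set $V(G)$ with distinct $u,v$ adjacent iff $\mathrm{dist}_G(u,v)\le m$. $\Delta$ is maximum degree. $\overline{K_n}$ is the edgeless graph on $n$ vertices. The lexicographic product $G_1\circ G_2$ has vertex set $V(G_1)\times V(G_2)$, with $(a,v)(b,u)$ an edge iff $ab\in E(G_1)$, or $a=b$ and $uv\in E(G_2)$; thus in $G\circ\overline{K_n}$, $(a,i)(b,j)$ is an edge iff $ab\in E(G)$. $H$ is an $r$-shallow minor of $G'$ if there are pairwise vertex-disjoint connected subgraphs $\mu(v)$ ($v\in V(H)$) of $G'$, each of radius at most $r$, such that for every $vw\in E(H)$ some edge of $G'$ joins $\mu(v)$ and $\mu(w)$. *)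

(* Graphs: a finite simple graph is a symmetric irreflexive
   relation e : rel T on a finType T. *)
From mathcomp Require Import all_boot all_order.
From Stdlib Require Import ClassicalEpsilon.
Set Implicit Arguments. Unset Strict Implicit. Unset Printing Implicit Defensive.

Definition dist_le (T : finType) (e : rel T) (m : nat) (u v : T) : Prop :=
  exists s : seq T, [&& size s <= m, path e u s & last u s == v].

Definition gpow (T : finType) (e : rel T) (m : nat) : T -> T -> Prop :=
  fun u v => u <> v /\ dist_le e m u v.

Definition asb (P : Prop) : bool :=
  if excluded_middle_informative P then true else false.

Definition deg (T : finType) (e : T -> T -> Prop) (v : T) : nat :=
  #|[set u : T | asb (e v u)]|.
Definition maxdeg (T : finType) (e : T -> T -> Prop) : nat :=
  \max_(v : T) deg e v.

(* Lexicographic product G o (edgeless graph on n vertices):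
   (a,i)(b,j) is an edge iff ab is an edge of G. *)
Definition lexK (T : finType) (e : rel T) (n : nat) : rel (T * 'I_n) :=
  fun x y => e x.1 y.1.
Arguments lexK {T} e n.

(* H (vertex type V, adjacency h) is an r-shallow minor of G' (vertex type W,
   adjacency g): there are pairwise vertex-disjoint subgraphs
   (vertex set mu v, edge relation sub v, a symmetric subrelation of g on mu v),
   each of radius at most r (hence connected): some centre c in mu v reaches
   every vertex of mu v by a walk of length <= r inside the subgraph; and every
   edge vw of H is joined by an edge of G' between mu v and mu w. *)
Definition shallow_minor (V W : finType) (h : V -> V -> Prop) (r : nat)
  (g : rel W) : Prop :=
  exists (mu : V -> {set W}) (sub : V -> rel W),
    [/\ forall v w, v <> w -> [disjoint mu v & mu w],
        forall v x y, sub v x y -> [/\ x \in mu v, y \in mu v & g x y],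
        forall v, symmetric (sub v),
        forall v, exists2 c, c \in mu v &
                    forall x, x \in mu v -> dist_le (sub v) r c x
      & forall v w, h v w -> exists x y, [/\ x \in mu v, y \in mu w & g x y]].

(* Put r = k/2.  The ball of radius r around a vertex u has at most d+1
   elements, since all of them but u are neighbours of u in G^r; so the d+1
   copies of u can be labelled injectively by the vertices of that ball.  The
   branch set of v is formed by the copy of u labelled v, for u ranging over
   the ball around v.  Branch sets are disjoint by injectivity of the labels,
   and a walk of length at most r from v to u lifts to the copies labelled v,
   so each branch set has radius r.  A walk of length at most k <= 2r+1 from v to w
   has an edge ab with a within r of v and b within r of w, and its lift joins
   the branch sets of v and w. *)
From mathcomp Require Import all_boot all_order.
From mathcomp Require Import zify.
From Stdlib Require Import ClassicalEpsilon.

Set Implicit Arguments. Unset Strict Implicit. Unset Printing Implicit Defensive.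

Lemma asbP (P : Prop) : reflect P (asb P).
Proof. by rewrite /asb; case: excluded_middle_informative => h; constructor. Qed.

Section Walks.
Variables (T : finType) (e : rel T).

Lemma dist_le_refl n u : dist_le e n u u.
Proof. by exists [::]; rewrite /= eqxx. Qed.

Lemma dist_le_mono n m u v : n <= m -> dist_le e n u v -> dist_le e m u v.
Proof. by move=> le_nm [s /and3P[sz p l]]; exists s; rewrite p l (leq_trans sz). Qed.

Lemma dist_le_rcons n u a b : dist_le e n u a -> e a b -> dist_le e n.+1 u b.
Proof.
move=> [s /and3P[sz p /eqP<-]] eab; exists (rcons s b).
by rewrite size_rcons ltnS sz rcons_path p eab last_rcons eqxx.
Qed.

Lemma dist_le_sym n u v : symmetric e -> dist_le e n u v -> dist_le e n v u.
Proof.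
move=> sym_e [s /and3P[sz p /eqP<-]]; exists (rev (belast u s)).
rewrite size_rev size_belast sz rev_path (eq_path (e' := e)) ?p /=; last first.
  by move=> x y; rewrite /= sym_e.
by rewrite -(last_cons u (last u s)) -rev_rcons -lastI rev_cons last_rcons eqxx.
Qed.

Lemma dist_le_split_edge n1 n2 u v :
  dist_le e (n1 + n2).+1 u v -> u != v ->
  exists a b, [/\ dist_le e n1 u a, e a b & dist_le e n2 b v].
Proof.
move=> [s /and3P[sz p /eqP<-]] neq_uv.
have s_gt0 : 0 < size s by case: s neq_uv {sz p} => //=; rewrite eqxx.
pose i := minn n1 (size s).-1.
have lt_is : i < size s by rewrite /i; lia.
have def_s : s = take i s ++ nth u s i :: drop i.+1 s.
  by rewrite -drop_nth // cat_take_drop.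
have last_s : last u s = last (nth u s i) (drop i.+1 s).
  by rewrite {1}def_s last_cat.
move: p; rewrite {1}def_s cat_path /= => /and3P[p1 eab p2].
exists (last u (take i s)), (nth u s i); split=> //.
  by exists (take i s); rewrite p1 eqxx size_take; case: ltnP => /=; lia.
exists (drop i.+1 s); rewrite p2 size_drop last_s eqxx andbT.
by rewrite /i; lia.
Qed.

End Walks.

Section Labelling.
Variable T : finType.

Definition set_label (A : {set T}) n (x : T) : 'I_n.+1 := inord (index x (enum A)).

Lemma set_label_inj (A : {set T}) n : #|A| <= n.+1 -> {in A &, injective (set_label A n)}.
Proof.
move=> cardA x y xA yA /(congr1 val).
have index_lt z : z \in A -> index z (enum A) <= n.
  by move=> zA; rewrite -ltnS (leq_trans _ cardA) // cardE index_mem mem_enum.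
rewrite /= !inordK ?ltnS ?index_lt //.
by apply: (index_inj x); rewrite mem_enum.
Qed.

End Labelling.

Section ShallowMinor.
Variables (T : finType) (e : rel T) (r : nat).
Hypothesis sym_e : symmetric e.

Definition ball u : {set T} := [set w | asb (dist_le e r w u)].

Lemma mem_ball u w : (w \in ball u) = asb (dist_le e r w u).
Proof. by rewrite inE. Qed.

Local Notation n := (maxdeg (gpow e r)).

Lemma card_ball u : #|ball u| <= n.+1.
Proof.
have sub_ball : ball u \subset u |: [set w | asb (gpow e r u w)].
  apply/subsetP => w; rewrite !inE => /asbP d_wu.
  case: eqVneq => [//| neq_wu] /=; apply/asbP; split.
    by move=> eq_uw; rewrite eq_uw eqxx in neq_wu.
  exact: dist_le_sym.
rewrite (leq_trans (subset_leq_card sub_ball)) // cardsU1 -add1n leq_add ?leq_b1 //.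
exact: (@leq_bigmax _ (deg (gpow e r)) u).
Qed.

Definition slot u : T -> 'I_n.+1 := set_label (ball u) n.

Definition branch v : {set T * 'I_n.+1} :=
  [set x | (v \in ball x.1) && (x.2 == slot x.1 v)].

Definition branch_rel v : rel (T * 'I_n.+1) :=
  fun x y => [&& x \in branch v, y \in branch v & lexK e n.+1 x y].

Lemma mem_branch v u : ((u, slot u v) \in branch v) = (v \in ball u).
Proof. by rewrite inE /= eqxx andbT. Qed.

Lemma branch_disjoint v w : v != w -> [disjoint branch v & branch w].
Proof.
move=> neq_vw; rewrite -setI_eq0; apply/eqP/setP => -[u i].
rewrite in_setI [_ \in branch v]inE [_ \in branch w]inE in_set0 /=.
apply/negP => /andP[/andP[vu /eqP->] /andP[wu /eqP eq_slot]].
by rewrite (set_label_inj (card_ball u) vu wu eq_slot) eqxx in neq_vw.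
Qed.

Lemma branch_rel_sym v : symmetric (branch_rel v).
Proof. by move=> x y; rewrite /branch_rel /lexK sym_e andbCA. Qed.

Lemma branch_path v a s m :
  path e a s -> dist_le e m v a -> m + size s <= r ->
  path (branch_rel v) (a, slot a v) [seq (y, slot y v) | y <- s].
Proof.
elim: s a m => [//| b s IHs] a m /= /andP[eab p] d_va le_r.
have d_vb := dist_le_rcons d_va eab.
rewrite (IHs b m.+1) // ?addSnnS // andbT /branch_rel !mem_branch !mem_ball /lexK eab.
apply/and3P; split=> //; apply/asbP.
  by apply: dist_le_mono d_va; lia.
by apply: dist_le_mono d_vb; lia.
Qed.

Lemma branch_radius v x : x \in branch v -> dist_le (branch_rel v) r (v, slot v v) x.
Proof.
case: x => u i; rewrite inE /= => /andP[/[dup] vu]; rewrite mem_ball.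
move=> /asbP[s /and3P[sz p /eqP def_u]] /eqP->.
exists [seq (y, slot y v) | y <- s].
rewrite size_map sz (branch_path p (dist_le_refl e 0 v)) //=.
by rewrite (last_map (fun y => (y, slot y v))) def_u eqxx.
Qed.

Lemma branch_adjacent v w : dist_le e (r + r).+1 v w -> v != w ->
  exists x y, [/\ x \in branch v, y \in branch w & lexK e n.+1 x y].
Proof.
move=> d_vw neq_vw; have [a [b [d_va eab d_bw]]] := dist_le_split_edge d_vw neq_vw.
exists (a, slot a v), (b, slot b w).
by rewrite !mem_branch !mem_ball; split=> //; apply/asbP => //; exact: dist_le_sym.
Qed.

End ShallowMinor.

Arguments slot {T} e r u.
Arguments branch {T} e r v.
Arguments branch_rel {T} e r v.

Theorem lemma26 (T : finType) (e : rel T) (k : nat) :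
  symmetric e -> irreflexive e -> 1 <= k ->
  shallow_minor (gpow e k) k./2
    (lexK e (maxdeg (gpow e k./2)).+1).
Proof.
move=> sym_e _ _; exists (branch e k./2), (branch_rel e k./2); split.
- by move=> v w /eqP; apply: branch_disjoint.
- by move=> v x y /and3P[].
- exact: branch_rel_sym.
- move=> v; exists (v, slot e k./2 v v); last exact: branch_radius.
  by rewrite mem_branch mem_ball; apply/asbP; apply: dist_le_refl.
- move=> v w [/eqP neq_vw d_vw]; apply: branch_adjacent => //.
  by apply: dist_le_mono d_vw; rewrite -divn2; lia.
Qed.
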